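(* Consider momentum gradient flow with parameter $\lambda>0$ on a 2-layer diagonal linear network as described in the context. Assume the trajectory $(u_t,v_t)$ is bounded and that the asymptotic balancedness $\Delta_\infty=\lim_{t\to\infty}\Delta_t$ has nonzero coordinates. Then there exists $T\ge0$ such that for all $t\ge T$, $\Delta_t$ has all coordinates positive, and the predictors $\theta_t=u_t\odot v_t$ follow a momentum mirror flow with time-varying potentials $\Phi_t$: $$\lambda\frac{\mathrm{d}^2\nabla\Phi_t(\theta_t)}{\mathrm{d}t^2}+\frac{\mathrm{d}\nabla\Phi_t(\theta_t)}{\mathrm{d}t}+\nabla L(\theta_t)=0,\qquad t\ge T.$$ Furthermore, if the balancedness $\Delta_t$ has nonzero coordinates for all $t\in[0,+\infty]$, this momentum mirror flow holds for every $t\ge0$.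
   Context: Data $x_1,\dots,x_n\in\mathbb{R}^d$, $y\in\mathbb{R}^n$, loss $L(\theta)=\frac{1}{2n}\sum_{i=1}^n(y_i-\langle x_i,\theta\rangle)^2$. Vector operations are coordinate-wise. Momentum gradient flow on the diagonal linear network: $(u_t,v_t)$ solves $\lambda\ddot u_t+\dot u_t+\nabla L(\theta_t)\odot v_t=0$, $\lambda\ddot v_t+\dot v_t+\nabla L(\theta_t)\odot u_t=0$, $\theta_t=u_t\odot v_t$, with $\dot u_0=\dot v_0=0$ and $|u_0^2-v_0^2|$ having all coordinates nonzero. $w_{\pm,t}=u_t\pm v_t$, $\Delta_t=|u_t^2-v_t^2|=|w_{+,t}w_{-,t}|$. Hyperbolic entropy: for $\Delta\in(0,\infty)^d$, $\psi_\Delta(\theta)=\frac14\sum_{i=1}^d\big(2\theta_i\mathrm{arcsinh}(2\theta_i/\Delta_i)-\sqrt{4\theta_i^2+\Delta_i^2}+\Delta_i\big)$. The potentials are defined (for $t$ with $\Delta_t>0$) by $\Phi_t(\theta)=\psi_{\Delta_t}(\theta)-\langle\phi_t,\theta\rangle$, where $\xi_t=-\int_0^t\nabla L(\theta_s)(1-e^{-(t-s)/\lambda})\,\mathrm{d}s$, $\alpha_{\pm,t}=w_{\pm,t}\odot\exp(\mp\xi_t)$, and $\phi_t=\frac12\mathrm{arcsinh}\Big(\frac{\alpha_{+,t}^2-\alpha_{-,t}^2}{2\Delta_t}\Big)$. *)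

From Stdlib Require Import Reals Lra.
From Coquelicot Require Import Coquelicot.
Open Scope R_scope.

(* Vectors of R^d are represented as functions nat -> R; only coordinates
   0 <= j < d are meaningful. Data x_i are rows  x i : nat -> R, i < n. *)

Fixpoint sumR (m : nat) (f : nat -> R) : R :=
  match m with
  | O => 0
  | S m' => sumR m' f + f m'
  end.

Definition dotR (d : nat) (a b : nat -> R) : R := sumR d (fun k => a k * b k).

Definition upd (theta : nat -> R) (i : nat) (z : R) : nat -> R :=
  fun k => if Nat.eqb k i then z else theta k.

Definition grad (F : (nat -> R) -> R) (theta : nat -> R) (i : nat) : R :=
  Derive (fun z => F (upd theta i z)) (theta i).

Definition loss (n d : nat) (x : nat -> nat -> R) (y : nat -> R)
  (theta : nat -> R) : R :=
  / (2 * INR n) * sumR n (fun i => (y i - dotR d (x i) theta) ^ 2).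

Definition psi (d : nat) (Delta theta : nat -> R) : R :=
  / 4 * sumR d (fun i =>
    2 * theta i * arcsinh (2 * theta i / Delta i)
    - sqrt (4 * theta i ^ 2 + Delta i ^ 2) + Delta i).

(* For interior points this is the usual derivative; at the left end point
   of an interval [T, +oo) it is the right derivative. *)
Definition deriv_within (D : R -> Prop) (f : R -> R) (t l : R) : Prop :=
  filterlim (fun s => (f s - f t) / (s - t))
    (within (fun s => D s /\ s <> t) (locally t)) (locally l).

Definition from (T : R) : R -> Prop := fun s => T <= s.

Definition theta_of (u v : R -> nat -> R) (t : R) : nat -> R :=
  fun j => u t j * v t j.

Definition Delta_of (u v : R -> nat -> R) (t : R) : nat -> R :=
  fun j => Rabs (u t j ^ 2 - v t j ^ 2).

Definition xi_of (n d : nat) (x : nat -> nat -> R) (y : nat -> R) (lam : R)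
  (u v : R -> nat -> R) (t : R) : nat -> R :=
  fun j => - RInt (fun s => grad (loss n d x y) (theta_of u v s) j
                            * (1 - exp (- (t - s) / lam))) 0 t.

Definition phi_of (n d : nat) (x : nat -> nat -> R) (y : nat -> R) (lam : R)
  (u v : R -> nat -> R) (t : R) : nat -> R :=
  fun j =>
    let ap := (u t j + v t j) * exp (- xi_of n d x y lam u v t j) in
    let am := (u t j - v t j) * exp (xi_of n d x y lam u v t j) in
    / 2 * arcsinh ((ap ^ 2 - am ^ 2) / (2 * Delta_of u v t j)).

Definition Phi_of (n d : nat) (x : nat -> nat -> R) (y : nat -> R) (lam : R)
  (u v : R -> nat -> R) (t : R) (theta : nat -> R) : R :=
  psi d (Delta_of u v t) theta - dotR d (phi_of n d x y lam u v t) theta.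

Definition momentum_mirror_flow_on (D : R -> Prop) (n d : nat)
  (x : nat -> nat -> R) (y : nat -> R) (lam : R) (u v : R -> nat -> R) : Prop :=
  exists G1 G2 : R -> nat -> R,
    forall t, D t -> forall j, (j < d)%nat ->
      deriv_within D
        (fun s => grad (Phi_of n d x y lam u v s) (theta_of u v s) j) t (G1 t j)
      /\ deriv_within D (fun s => G1 s j) t (G2 t j)
      /\ lam * G2 t j + G1 t j + grad (loss n d x y) (theta_of u v t) j = 0.

From Stdlib Require Import Reals Lra Lia.
From Coquelicot Require Import Coquelicot.
Open Scope R_scope.

(* Since phi_t is built from xi_t, the identity
   arcsinh ((a^2 - b^2) / (2 |a| |b|)) = ln (|a| / |b|), applied to a = u + v and
   b = u - v, gives grad Phi_t (theta_t) = xi_t exactly, at every time where Delta_t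
   has no zero coordinate.  Writing
   xi_t = - int_0^t g - lam v_t  with  v_t = - e^(-t/lam) / lam * int_0^t g(s) e^(s/lam) ds,
   g = grad L (theta_s), shows xi' = v and lam v' + v + g = 0, which is the momentum
   mirror flow.  Finally Delta_t -> Delta_oo with nonzero coordinates makes Delta_t
   positive after some time T. *)

Lemma deriv_within_of_is_derive (D : R -> Prop) (f h : R -> R) (t l : R) :
  (forall s, D s -> f s = h s) -> D t -> is_derive h t l ->
  deriv_within D f t l.
Proof.
  intros Hfh Dt Hh. apply is_derive_Reals in Hh.
  apply filterlim_locally. intros eps.
  destruct (Hh eps (cond_pos eps)) as [delta Hdelta].
  exists delta. intros s Hs [Ds Hst].
  change (Rabs (s - t) < delta) in Hs. change (Rabs ((f s - f t) / (s - t) - l) < eps).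
  rewrite (Hfh s Ds), (Hfh t Dt).
  replace s with (t + (s - t)) at 1 by ring.
  apply Hdelta; [lra | exact Hs].
Qed.

Lemma deriv_within_continuous (D : R -> Prop) (f : R -> R) (t l : R) :
  deriv_within D f t l -> forall eps, 0 < eps ->
  exists delta, 0 < delta /\
    forall s, D s -> Rabs (s - t) < delta -> Rabs (f s - f t) < eps.
Proof.
  intros Hf eps Heps.
  destruct (proj1 (filterlim_locally (U := R_UniformSpace) _ l) Hf
              (mkposreal 1 Rlt_0_1)) as [delta Hdelta].
  set (K := Rabs l + 1).
  assert (HK : 0 < K) by (unfold K; pose proof (Rabs_pos l); lra).
  exists (Rmin delta (eps / K)). split.
  { apply Rmin_pos; [apply cond_pos | apply Rdiv_lt_0_compat; lra]. }
  intros s Ds Hs.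
  destruct (Req_dec s t) as [-> | Hst].
  { rewrite Rminus_diag, Rabs_R0. exact Heps. }
  assert (Hquot : Rabs ((f s - f t) / (s - t)) <= K).
  { assert (Hball : ball t delta s)
      by (change (Rabs (s - t) < delta); eapply Rlt_le_trans; [exact Hs | apply Rmin_l]).
    specialize (Hdelta s Hball (conj Ds Hst)). change (Rabs ((f s - f t) / (s - t) - l) < 1) in Hdelta.
    pose proof (Rabs_triang_inv ((f s - f t) / (s - t)) l). unfold K. lra. }
  assert (Hsmall : K * Rabs (s - t) < eps).
  { assert (Hs' : Rabs (s - t) < eps / K)
      by (eapply Rlt_le_trans; [exact Hs | apply Rmin_r]).
    apply Rmult_lt_compat_l with (r := K) in Hs'; [|exact HK].
    replace (K * (eps / K)) with eps in Hs' by (field; lra). exact Hs'. }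
  replace (f s - f t) with ((f s - f t) / (s - t) * (s - t)) by (field; lra).
  rewrite Rabs_mult.
  pose proof (Rabs_pos (s - t)).
  apply Rle_lt_trans with (K * Rabs (s - t)); [|exact Hsmall].
  apply Rmult_le_compat_r; assumption.
Qed.

Lemma Rabs_Rmax_sub_le (a s t : R) : Rabs (Rmax s a - Rmax t a) <= Rabs (s - t).
Proof.
  unfold Rmax; destruct (Rle_dec s a), (Rle_dec t a);
    unfold Rabs; repeat destruct (Rcase_abs _); lra.
Qed.

Lemma continuous_Rmax_extension (a : R) (f : R -> R) :
  (forall t, a <= t -> exists l, deriv_within (from a) f t l) ->
  forall t, continuous (fun s => f (Rmax s a)) t.
Proof.
  intros Hf t. apply filterlim_locally. intros eps.
  destruct (Hf (Rmax t a) (Rmax_r t a)) as [l Hl].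
  destruct (deriv_within_continuous _ _ _ _ Hl eps (cond_pos eps))
    as [delta [Hdelta Hcont]].
  exists (mkposreal delta Hdelta). intros s Hs.
  change (Rabs (s - t) < delta) in Hs.
  apply Hcont; [apply Rmax_r |].
  eapply Rle_lt_trans; [apply Rabs_Rmax_sub_le | exact Hs].
Qed.

Lemma sumR_ext (m : nat) (f g : nat -> R) :
  (forall i, (i < m)%nat -> f i = g i) -> sumR m f = sumR m g.
Proof.
  induction m as [|m IH]; intros Hfg; simpl; [reflexivity |].
  rewrite IH, Hfg; [reflexivity | lia | intros; apply Hfg; lia].
Qed.

Lemma sumR_scal (m : nat) (c : R) (f : nat -> R) :
  sumR m (fun i => c * f i) = c * sumR m f.
Proof. induction m as [|m IH]; simpl; [ring | rewrite IH; ring]. Qed.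

Lemma is_derive_sumR (m : nat) (F F' : nat -> R -> R) (z : R) :
  (forall i, (i < m)%nat -> is_derive (F i) z (F' i z)) ->
  is_derive (fun w => sumR m (fun i => F i w)) z (sumR m (fun i => F' i z)).
Proof.
  induction m as [|m IH]; intros HF; simpl.
  - apply (is_derive_const (V := R_NormedModule)).
  - apply (is_derive_plus (fun w => sumR m (fun i => F i w)) (F m));
      [apply IH; intros i Hi; apply HF | apply HF]; lia.
Qed.

Lemma continuous_sumR (m : nat) (F : nat -> R -> R) (t : R) :
  (forall i, (i < m)%nat -> continuous (F i) t) ->
  continuous (fun s => sumR m (fun i => F i s)) t.
Proof.
  induction m as [|m IH]; intros HF; simpl.
  - apply continuous_const.
  - apply (continuous_plus (fun s => sumR m (fun i => F i s)) (F m));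
      [apply IH; intros i Hi; apply HF | apply HF]; lia.
Qed.

Lemma is_derive_sumR_upd (m : nat) (f : nat -> R -> R) (th : nat -> R)
    (j : nat) (z l : R) :
  (j < m)%nat -> is_derive (f j) z l ->
  is_derive (fun w => sumR m (fun i => f i (upd th j w i))) z l.
Proof.
  unfold upd. induction m as [|m IH]; intros Hj Hf; simpl; [lia |].
  destruct (Nat.eq_dec j m) as [<- | Hjm].
  - rewrite Nat.eqb_refl.
    apply (is_derive_ext (fun w => sumR j (fun i => f i (th i)) + f j w)).
    { intros w. f_equal. apply sumR_ext. intros i Hi.
      destruct (Nat.eqb_spec i j); [lia | reflexivity]. }
    replace l with (0 + l) by ring.
    apply (is_derive_plus (fun _ => sumR j (fun i => f i (th i))) (f j));
      [apply (is_derive_const (V := R_NormedModule)) | exact Hf].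
  - destruct (Nat.eqb_spec m j) as [Hmj | _]; [lia |].
    replace l with (l + 0) by ring.
    apply (is_derive_plus _ (fun _ => f m (th m))); [apply IH; [lia | exact Hf] |].
    apply (is_derive_const (V := R_NormedModule)).
Qed.

Lemma dotR_upd_self (d : nat) (a th : nat -> R) (j : nat) :
  dotR d a (upd th j (th j)) = dotR d a th.
Proof.
  apply sumR_ext. intros i _. unfold upd.
  destruct (Nat.eqb_spec i j) as [-> |]; reflexivity.
Qed.

Lemma is_derive_dotR_upd (d : nat) (a th : nat -> R) (j : nat) (z : R) :
  (j < d)%nat -> is_derive (fun w => dotR d a (upd th j w)) z (a j).
Proof.
  intros Hj. apply (is_derive_sumR_upd d (fun i w => a i * w)); [exact Hj |].
  auto_derive; [exact I | ring].
Qed.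

Lemma grad_loss (n d : nat) (x : nat -> nat -> R) (y th : nat -> R) (j : nat) :
  (j < d)%nat ->
  grad (loss n d x y) th j = / INR n * sumR n (fun i => (dotR d (x i) th - y i) * x i j).
Proof.
  intros Hj. unfold grad, loss. apply is_derive_unique.
  assert (Hsum : is_derive
            (fun w => sumR n (fun i => (y i - dotR d (x i) (upd th j w)) ^ 2)) (th j)
            (sumR n (fun i => 2 * ((dotR d (x i) (upd th j (th j)) - y i) * x i j)))).
  { apply (is_derive_sumR n _ (fun i w => 2 * ((dotR d (x i) (upd th j w) - y i) * x i j))).
    intros i _.
    replace (2 * ((dotR d (x i) (upd th j (th j)) - y i) * x i j))
      with (INR 2 * (0 - x i j) * (y i - dotR d (x i) (upd th j (th j))) ^ Nat.pred 2)
      by (simpl; ring).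
    apply (is_derive_pow (fun w => y i - dotR d (x i) (upd th j w))).
    apply (is_derive_minus (fun _ => y i)).
    - apply (is_derive_const (V := R_NormedModule)).
    - apply is_derive_dotR_upd. exact Hj. }
  rewrite (sumR_ext n _ (fun i => 2 * ((dotR d (x i) th - y i) * x i j))), sumR_scal in Hsum
    by (intros; rewrite dotR_upd_self; reflexivity).
  set (S := sumR n (fun i => (dotR d (x i) th - y i) * x i j)) in *.
  replace (/ INR n * S) with (/ (2 * INR n) * (2 * S)).
  - apply is_derive_scal. exact Hsum.
  - rewrite Rinv_mult. replace (/ 2 * / INR n * (2 * S)) with (2 * / 2 * (/ INR n * S)) by ring.
    rewrite Rinv_r; [ring | lra].
Qed.

Lemma continuous_grad_loss (n d : nat) (x : nat -> nat -> R) (y : nat -> R)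
    (th : R -> nat -> R) (j : nat) (t : R) :
  (j < d)%nat -> (forall k, (k < d)%nat -> continuous (fun s => th s k) t) ->
  continuous (fun s => grad (loss n d x y) (th s) j) t.
Proof.
  intros Hj Hth.
  apply (continuous_ext
           (fun s => / INR n * sumR n (fun i => (dotR d (x i) (th s) - y i) * x i j)));
    [intros s; symmetry; apply grad_loss, Hj |].
  apply (continuous_mult (fun _ => / INR n)); [apply continuous_const |].
  apply (continuous_sumR n (fun i s => (dotR d (x i) (th s) - y i) * x i j)).
  intros i _.
  apply (continuous_mult (fun s => dotR d (x i) (th s) - y i) (fun _ => x i j));
    [| apply continuous_const].
  apply (continuous_minus (fun s => dotR d (x i) (th s)) (fun _ => y i));
    [| apply continuous_const].
  apply (continuous_sumR d (fun k s => x i k * th s k)). intros k Hk.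
  apply (continuous_mult (fun _ => x i k)); [apply continuous_const | apply Hth, Hk].
Qed.

Lemma is_derive_entropy_term (D z : R) : 0 < D ->
  is_derive (fun w => 2 * w * arcsinh (2 * w / D) - sqrt (4 * w ^ 2 + D ^ 2) + D) z
    (2 * arcsinh (2 * z / D)).
Proof.
  intros HD.
  set (S := sqrt (4 * z ^ 2 + D ^ 2)).
  assert (HS2 : S * S = 4 * z ^ 2 + D ^ 2) by (apply sqrt_sqrt; nra).
  assert (HS : 0 < S) by (apply sqrt_lt_R0; nra).
  assert (Harcsinh : is_derive (fun w => arcsinh (2 * w / D)) z (2 / S)).
  { replace (2 / S) with (2 / D * / sqrt ((2 * z / D) ^ 2 + 1)).
    - apply (is_derive_comp arcsinh (fun w => 2 * w / D)).
      + apply is_derive_Reals, derivable_pt_lim_arcsinh.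
      + auto_derive; [exact I | field; lra].
    - replace ((2 * z / D) ^ 2 + 1) with ((S / D) ^ 2)
        by (replace ((S / D) ^ 2) with (S * S / (D * D)) by (field; lra);
            rewrite HS2; field; lra).
      rewrite sqrt_pow2; [field; lra |].
      apply Rlt_le, Rdiv_lt_0_compat; assumption. }
  assert (Hsqrt : is_derive (fun w => sqrt (4 * w ^ 2 + D ^ 2)) z (4 * z / S)).
  { auto_derive; [nra |]. replace (4 * (z * (z * 1)) + D * (D * 1)) with (4 * z ^ 2 + D ^ 2) by ring.
    fold S. field. lra. }
  replace (2 * arcsinh (2 * z / D))
    with (2 * arcsinh (2 * z / D) + 2 * z * (2 / S) - 4 * z / S + 0) by (field; lra).
  apply (is_derive_plus _ (fun _ => D)); [| apply (is_derive_const (V := R_NormedModule))].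
  apply (is_derive_minus _ (fun w => sqrt (4 * w ^ 2 + D ^ 2))); [| exact Hsqrt].
  apply (is_derive_mult (fun w => 2 * w) (fun w => arcsinh (2 * w / D)));
    [auto_derive; [exact I | ring] | exact Harcsinh | intros; apply Rmult_comm].
Qed.

Lemma grad_psi_sub_dotR (d : nat) (Del phi th : nat -> R) (j : nat) :
  (j < d)%nat -> 0 < Del j ->
  grad (fun th => psi d Del th - dotR d phi th) th j
  = / 2 * arcsinh (2 * th j / Del j) - phi j.
Proof.
  intros Hj HDel. unfold grad, psi. apply is_derive_unique.
  replace (/ 2 * arcsinh (2 * th j / Del j) - phi j)
    with (/ 4 * (2 * arcsinh (2 * th j / Del j)) - phi j) by field.
  apply (is_derive_minus _ (fun w => dotR d phi (upd th j w)));
    [| apply is_derive_dotR_upd, Hj].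
  apply is_derive_scal.
  apply (is_derive_sumR_upd d
           (fun i w => 2 * w * arcsinh (2 * w / Del i) - sqrt (4 * w ^ 2 + Del i ^ 2) + Del i));
    [exact Hj |].
  apply is_derive_entropy_term, HDel.
Qed.

Lemma arcsinh_sq_diff (a b : R) : a <> 0 -> b <> 0 ->
  arcsinh ((a ^ 2 - b ^ 2) / (2 * (Rabs a * Rabs b))) = ln (Rabs a / Rabs b).
Proof.
  intros Ha Hb. apply Rabs_pos_lt in Ha, Hb.
  rewrite <- (arcsinh_sinh (ln (Rabs a / Rabs b))). f_equal.
  unfold sinh. rewrite exp_Ropp, exp_ln by (apply Rdiv_lt_0_compat; assumption).
  rewrite <- (pow2_abs a), <- (pow2_abs b). field. lra.
Qed.

(* With a = u + v and b = u - v both arguments have the form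
   (a^2 - b^2) / (2 |a| |b|), and replacing (a, b) by (a e^-xi, b e^xi) keeps
   |a| |b| but shifts ln (|a| / |b|) by -2 xi. *)
Lemma arcsinh_balance_identity (u v xi : R) : u ^ 2 - v ^ 2 <> 0 ->
  / 2 * arcsinh (2 * (u * v) / Rabs (u ^ 2 - v ^ 2))
  - / 2 * arcsinh ((((u + v) * exp (- xi)) ^ 2 - ((u - v) * exp xi) ^ 2)
                   / (2 * Rabs (u ^ 2 - v ^ 2)))
  = xi.
Proof.
  intros Huv.
  set (a := u + v). set (b := u - v).
  assert (Hab : u ^ 2 - v ^ 2 = a * b) by (unfold a, b; ring).
  assert (Ha : a <> 0) by (intros Ha; apply Huv; rewrite Hab, Ha; ring).
  assert (Hb : b <> 0) by (intros Hb; apply Huv; rewrite Hab, Hb; ring).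
  pose proof (Rabs_pos_lt a Ha). pose proof (Rabs_pos_lt b Hb).
  pose proof (exp_pos xi). pose proof (exp_pos (- xi)).
  assert (Habs_exp : forall r, Rabs (exp r) = exp r)
    by (intros r; apply Rabs_pos_eq, Rlt_le, exp_pos).
  assert (Hexp : exp (- xi) = / exp xi) by apply exp_Ropp.
  assert (Hprod : 2 * (u * v) = (a ^ 2 - b ^ 2) / 2) by (unfold a, b; field).
  rewrite Hab, Rabs_mult, Hprod.
  replace ((a ^ 2 - b ^ 2) / 2 / (Rabs a * Rabs b))
    with ((a ^ 2 - b ^ 2) / (2 * (Rabs a * Rabs b))) by (field; lra).
  replace (Rabs a * Rabs b) with (Rabs (a * exp (- xi)) * Rabs (b * exp xi)) at 2
    by (rewrite !Rabs_mult, !Habs_exp, Hexp; field; lra).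
  rewrite !arcsinh_sq_diff by (try apply Rmult_integral_contrapositive; lra).
  replace (Rabs (a * exp (- xi)) / Rabs (b * exp xi))
    with (Rabs a / Rabs b * exp (- xi) * exp (- xi))
    by (rewrite !Rabs_mult, !Habs_exp, Hexp; field; lra).
  assert (Hratio : 0 < Rabs a / Rabs b) by (apply Rdiv_lt_0_compat; assumption).
  rewrite ln_mult, ln_mult, ln_exp
    by first [assumption | apply Rmult_lt_0_compat; assumption].
  field.
Qed.

Lemma is_derive_RInt_of_continuous (f : R -> R) (a t : R) :
  (forall s, continuous f s) -> is_derive (fun b => RInt f a b) t (f t).
Proof.
  intros Hf. apply (is_derive_RInt f (RInt f a) a t); [| apply Hf].
  apply filter_forall. intros b.
  apply (RInt_correct (V := R_CompleteNormedModule)).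
  apply (ex_RInt_continuous (V := R_CompleteNormedModule)). intros; apply Hf.
Qed.

Definition momentum_integral (lam : R) (g : R -> R) (t : R) : R :=
  - RInt (fun s => g s * (1 - exp (- (t - s) / lam))) 0 t.

Definition momentum_velocity (lam : R) (g : R -> R) (t : R) : R :=
  - / lam * exp (- t / lam) * RInt (fun s => g s * exp (s / lam)) 0 t.

Section MomentumIntegral.

Variables (lam : R) (g : R -> R).
Hypothesis Hlam : 0 < lam.
Hypothesis Hg : forall s, continuous g s.

Let continuous_weighted (s : R) : continuous (fun r => g r * exp (r / lam)) s.
Proof.
  apply (continuous_mult g (fun r => exp (r / lam))); [apply Hg |].
  apply (ex_derive_continuous (fun r => exp (r / lam))). auto_derive. exact I.
Qed.

Lemma momentum_integral_split (t : R) :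
  momentum_integral lam g t = - RInt g 0 t - lam * momentum_velocity lam g t.
Proof.
  set (c := exp (- t / lam)).
  assert (Hc : lam * momentum_velocity lam g t
               = - (c * RInt (fun s => g s * exp (s / lam)) 0 t))
    by (unfold momentum_velocity; fold c; field; lra).
  unfold momentum_integral. rewrite Hc.
  rewrite (RInt_ext _ (fun s => minus (g s) (scal c (g s * exp (s / lam))))).
  2: { intros s _. unfold minus, plus, opp, scal; simpl; unfold mult; simpl.
       replace (- (t - s) / lam) with (- t / lam + s / lam) by (field; lra).
       rewrite exp_plus. fold c. ring. }
  rewrite (RInt_minus (V := R_CompleteNormedModule)), (RInt_scal (V := R_CompleteNormedModule)).
  - unfold minus, plus, opp, scal; simpl; unfold mult; simpl. ring.
  - apply (ex_RInt_continuous (V := R_CompleteNormedModule)). intros; apply continuous_weighted.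
  - apply (ex_RInt_continuous (V := R_CompleteNormedModule)). intros; apply Hg.
  - apply (ex_RInt_scal (V := R_CompleteNormedModule)).
    apply (ex_RInt_continuous (V := R_CompleteNormedModule)). intros; apply continuous_weighted.
Qed.

Lemma is_derive_momentum_velocity (t : R) :
  is_derive (momentum_velocity lam g) t (- (momentum_velocity lam g t + g t) / lam).
Proof.
  unfold momentum_velocity.
  replace (- (- / lam * exp (- t / lam) * RInt (fun s => g s * exp (s / lam)) 0 t + g t) / lam)
    with ((- / lam * (- / lam * exp (- t / lam))) * RInt (fun s => g s * exp (s / lam)) 0 t
          + (- / lam * exp (- t / lam)) * (g t * exp (t / lam))).
  2: { replace (t / lam) with (- (- t / lam)) by (field; lra).
       rewrite exp_Ropp. pose proof (exp_pos (- t / lam)). field. lra. }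
  apply (is_derive_mult (fun s => - / lam * exp (- s / lam))
           (fun b => RInt (fun s => g s * exp (s / lam)) 0 b));
    [| apply (is_derive_RInt_of_continuous (fun s => g s * exp (s / lam))), continuous_weighted
     | intros; apply Rmult_comm].
  auto_derive; [exact I | unfold Rdiv; ring].
Qed.

Lemma is_derive_momentum_integral (t : R) :
  is_derive (momentum_integral lam g) t (momentum_velocity lam g t).
Proof.
  apply (is_derive_ext (fun s => - RInt g 0 s - lam * momentum_velocity lam g s));
    [intros s; symmetry; apply momentum_integral_split |].
  replace (momentum_velocity lam g t)
    with (- g t - lam * (- (momentum_velocity lam g t + g t) / lam)) by (field; lra).
  apply (is_derive_minus (fun s => - RInt g 0 s)).
  - apply (is_derive_opp (fun s => RInt g 0 s)), is_derive_RInt_of_continuous, Hg.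
  - apply is_derive_scal, is_derive_momentum_velocity.
Qed.

End MomentumIntegral.

Lemma grad_Phi_of_at_theta (n d : nat) (x : nat -> nat -> R) (y : nat -> R) (lam : R)
    (u v : R -> nat -> R) (t : R) (j : nat) :
  (j < d)%nat -> Delta_of u v t j <> 0 ->
  grad (Phi_of n d x y lam u v t) (theta_of u v t) j = xi_of n d x y lam u v t j.
Proof.
  intros Hj HDelta.
  assert (Huv : u t j ^ 2 - v t j ^ 2 <> 0)
    by (intros H0; apply HDelta; unfold Delta_of; rewrite H0; apply Rabs_R0).
  unfold Phi_of. rewrite grad_psi_sub_dotR by (try apply Rabs_pos_lt; assumption).
  unfold theta_of, phi_of, Delta_of. cbv zeta.
  apply arcsinh_balance_identity, Huv.
Qed.

(* Frozen at its time-0 value for negative times, so that it is continuous on all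
   of R. *)
Definition loss_grad_along (n d : nat) (x : nat -> nat -> R) (y : nat -> R)
    (u v : R -> nat -> R) (j : nat) (s : R) : R :=
  grad (loss n d x y) (theta_of u v (Rmax s 0)) j.

Section Trajectory.

Variables (n d : nat) (x : nat -> nat -> R) (y : nat -> R) (lam : R) (u v : R -> nat -> R).
Hypothesis Hlam : 0 < lam.
Hypothesis Hu : forall t, 0 <= t -> forall k, (k < d)%nat ->
  exists l, deriv_within (from 0) (fun s => u s k) t l.
Hypothesis Hv : forall t, 0 <= t -> forall k, (k < d)%nat ->
  exists l, deriv_within (from 0) (fun s => v s k) t l.

Lemma continuous_loss_grad_along (j : nat) (s : R) :
  (j < d)%nat -> continuous (loss_grad_along n d x y u v j) s.
Proof.
  intros Hj. apply (continuous_grad_loss n d x y (fun s => theta_of u v (Rmax s 0))); [exact Hj |].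
  intros k Hk. unfold theta_of.
  apply (continuous_mult (fun s => u (Rmax s 0) k) (fun s => v (Rmax s 0) k)).
  - apply (continuous_Rmax_extension 0 (fun s => u s k)). intros t Ht. apply Hu; assumption.
  - apply (continuous_Rmax_extension 0 (fun s => v s k)). intros t Ht. apply Hv; assumption.
Qed.

Lemma xi_of_momentum_integral (t : R) (j : nat) : 0 <= t ->
  xi_of n d x y lam u v t j = momentum_integral lam (loss_grad_along n d x y u v j) t.
Proof.
  intros Ht. unfold xi_of, momentum_integral. f_equal.
  apply RInt_ext. intros s Hs.
  rewrite Rmin_left, Rmax_right in Hs by exact Ht.
  unfold loss_grad_along. rewrite Rmax_left by lra. reflexivity.
Qed.

Lemma momentum_mirror_flow_from (T : R) : 0 <= T ->
  (forall t, T <= t -> forall j, (j < d)%nat -> Delta_of u v t j <> 0) ->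
  momentum_mirror_flow_on (from T) n d x y lam u v.
Proof.
  intros HT HDelta.
  set (g j := loss_grad_along n d x y u v j).
  exists (fun t j => momentum_velocity lam (g j) t),
         (fun t j => - (momentum_velocity lam (g j) t + g j t) / lam).
  intros t Ht j Hj. unfold from in Ht. split; [| split].
  - apply (deriv_within_of_is_derive _ _ (momentum_integral lam (g j))); [| exact Ht |].
    + intros s Hs. unfold from in Hs.
      rewrite grad_Phi_of_at_theta by auto.
      apply xi_of_momentum_integral. lra.
    + apply is_derive_momentum_integral; [exact Hlam |].
      intros s. apply continuous_loss_grad_along, Hj.
  - apply (deriv_within_of_is_derive _ _ (momentum_velocity lam (g j))); [easy | exact Ht |].
    apply is_derive_momentum_velocity; [exact Hlam |].
    intros s. apply continuous_loss_grad_along, Hj.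
  - unfold g, loss_grad_along. rewrite Rmax_left by lra. field. lra.
Qed.

End Trajectory.

Lemma is_lim_eventually_nonzero (f : R -> R) (l : R) :
  l <> 0 -> is_lim f p_infty l -> Rbar_locally p_infty (fun t => f t <> 0).
Proof.
  intros Hl Hlim. apply (Hlim (fun z => z <> 0)).
  exists (mkposreal (Rabs l) (Rabs_pos_lt l Hl)). intros z Hz ->.
  change (Rabs (0 - l) < Rabs l) in Hz.
  rewrite Rminus_0_l, Rabs_Ropp in Hz. lra.
Qed.

Lemma eventually_forall_lt (P : nat -> R -> Prop) (m : nat) :
  (forall j, (j < m)%nat -> Rbar_locally p_infty (P j)) ->
  Rbar_locally p_infty (fun t => forall j, (j < m)%nat -> P j t).
Proof.
  induction m as [| m IH]; intros HP.
  - apply filter_forall. intros t j Hj. lia.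
  - apply (filter_imp (fun t => (forall j, (j < m)%nat -> P j t) /\ P m t)).
    + intros t [Hlt Hm] j Hj.
      destruct (Nat.eq_dec j m) as [-> | Hjm]; [exact Hm | apply Hlt; lia].
    + apply filter_and; [apply IH; intros j Hj |]; apply HP; lia.
Qed.

Theorem proposition4
  (n d : nat) (x : nat -> nat -> R) (y : nat -> R) (lam : R)
  (u v du dv ddu ddv : R -> nat -> R)
  (Hn : (0 < n)%nat)
  (Hlam : 0 < lam)
  (* (u,v) is a C^2 solution on [0,+oo) of the momentum gradient flow *)
  (Hdu : forall t, 0 <= t -> forall j, (j < d)%nat ->
     deriv_within (from 0) (fun s => u s j) t (du t j) /\
     deriv_within (from 0) (fun s => du s j) t (ddu t j))
  (Hdv : forall t, 0 <= t -> forall j, (j < d)%nat ->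
     deriv_within (from 0) (fun s => v s j) t (dv t j) /\
     deriv_within (from 0) (fun s => dv s j) t (ddv t j))
  (Hode : forall t, 0 <= t -> forall j, (j < d)%nat ->
     lam * ddu t j + du t j + grad (loss n d x y) (theta_of u v t) j * v t j = 0 /\
     lam * ddv t j + dv t j + grad (loss n d x y) (theta_of u v t) j * u t j = 0)
  (Hinit : forall j, (j < d)%nat -> du 0 j = 0 /\ dv 0 j = 0)
  (HDelta0 : forall j, (j < d)%nat -> Delta_of u v 0 j <> 0)
  (* bounded trajectory *)
  (Hbdd : exists M, forall t, 0 <= t -> forall j, (j < d)%nat ->
     Rabs (u t j) <= M /\ Rabs (v t j) <= M)
  (* Delta_oo = lim Delta_t exists and has nonzero coordinates *)
  (HDinf : forall j, (j < d)%nat ->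
     exists l, l <> 0 /\ is_lim (fun t => Delta_of u v t j) p_infty l) :
  (exists T, 0 <= T /\
     (forall t, T <= t -> forall j, (j < d)%nat -> 0 < Delta_of u v t j) /\
     momentum_mirror_flow_on (from T) n d x y lam u v)
  /\
  ((forall t, 0 <= t -> forall j, (j < d)%nat -> Delta_of u v t j <> 0) ->
     momentum_mirror_flow_on (from 0) n d x y lam u v).
Proof.
  assert (Hu : forall t, 0 <= t -> forall k, (k < d)%nat ->
            exists l, deriv_within (from 0) (fun s => u s k) t l)
    by (intros t Ht k Hk; exists (du t k); apply Hdu; assumption).
  assert (Hv : forall t, 0 <= t -> forall k, (k < d)%nat ->
            exists l, deriv_within (from 0) (fun s => v s k) t l)
    by (intros t Ht k Hk; exists (dv t k); apply Hdv; assumption).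
  split.
  - assert (Hev : Rbar_locally p_infty
                    (fun t => forall j, (j < d)%nat -> Delta_of u v t j <> 0)).
    { apply eventually_forall_lt. intros j Hj.
      destruct (HDinf j Hj) as [l [Hl Hlim]].
      exact (is_lim_eventually_nonzero _ l Hl Hlim). }
    destruct Hev as [M HM].
    set (T := Rmax 0 (M + 1)).
    assert (HT : 0 <= T) by apply Rmax_l.
    assert (HMT : forall t, T <= t -> forall j, (j < d)%nat -> Delta_of u v t j <> 0).
    { intros t Ht. apply HM. pose proof (Rmax_r 0 (M + 1)) as HM1. fold T in HM1. lra. }
    exists T. split; [exact HT | split].
    + intros t Ht j Hj. apply Rabs_pos_lt. intros H0.
      apply (HMT t Ht j Hj). unfold Delta_of. rewrite H0. apply Rabs_R0.
    + apply momentum_mirror_flow_from; assumption.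
  - intros HDelta. apply momentum_mirror_flow_from; try assumption. lra.
Qed.
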